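(* Let $G$ be a connected graph, let $u\in V(G)$ with set of neighbours $N_G(u)=\{p_1,\dots,p_n\}$, $n\ge 2$, where $u$ is joined to $p_i$ by $a_i\ge 1$ edges for each $i$. If $u$ is not a cut vertex, then with $H=G-u$, $$t(G)=\Big(\sum_{i=1}^n a_i\Big)t(H)+\sum_{\substack{S\subset N_G(u)\\ |S|\ge 2}}\Big(\prod_{i\in I_S}a_i\Big)t(H_S),$$ where $I_S$ is the set of indices of the vertices in $S$ and $H_S$ is the graph obtained from $H$ by identifying all vertices of $S$ into one vertex.
   Context: Graphs are finite and may have multiple edges and loops; $t(H)$ is the number of spanning trees of $H$. $G-u$ is the graph obtained from $G$ by deleting the vertex $u$ together with all edges incident to it. A cut vertex is a vertex whose deletion disconnects the graph. *)

From mathcomp Require Import all_boot.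
Set Implicit Arguments. Unset Strict Implicit. Unset Printing Implicit Defensive.

(* A finite multigraph (multiple edges and loops allowed) whose vertices are
   the elements of [vset] (a subset of a finType V) and whose edges are the
   elements of [eset] (a subset of a finType E); edge e joins [src e] and [tgt e]
   (a loop when they coincide). *)
Record mgraph (V E : finType) := MGraph {
  vset : {set V};
  eset : {set E};
  src : E -> V;
  tgt : E -> V }.

Section MGraph.
Variables (V E : finType).
Implicit Types (G : mgraph V E) (F : {set E}) (u v x y : V).

Definition wf_graph G :=
  [forall e in eset G, (src G e \in vset G) && (tgt G e \in vset G)].

Definition joins G (e : E) x y :=
  ((src G e == x) && (tgt G e == y)) || ((src G e == y) && (tgt G e == x)).

Definition adjF G F : rel V := fun x y => [exists e in F, joins G e x y].

Definition connected G :=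
  [forall x in vset G, forall y in vset G, connect (adjF G (eset G)) x y].

(* F is acyclic: no edge of F lies on a cycle of F, i.e. the endpoints of each
   edge e of F are not connected in F minus e (this also excludes loops and
   pairs of parallel edges). *)
Definition acyclic G F :=
  [forall e in F, ~~ connect (adjF G (F :\ e)) (src G e) (tgt G e)].

Definition spanning_tree G F :=
  [&& F \subset eset G,
      [forall x in vset G, forall y in vset G, connect (adjF G F) x y]
    & acyclic G F].

Definition ntrees G : nat := #|[set F : {set E} | spanning_tree G F]|.

Definition del_vertex G u : mgraph V E :=
  MGraph (vset G :\ u)
         [set e in eset G | (src G e != u) && (tgt G e != u)]
         (src G) (tgt G).

Definition cut_vertex G u := (u \in vset G) && ~~ connected (del_vertex G u).

Definition nbhd G u : {set V} :=
  [set v in vset G | (v != u) && [exists e in eset G, joins G e u v]].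

Definition mult G u v : nat := #|[set e in eset G | joins G e u v]|.

(* identification of all vertices of S into one vertex, represented by a
   chosen element of S (S is assumed to be a nonempty subset of the vertices) *)
Definition ident_map (S : {set V}) (d : V) (x : V) : V :=
  if x \in S then odflt d [pick y in S] else x.

Definition identify G (S : {set V}) : mgraph V E :=
  let phi := fun x => ident_map S x x in
  MGraph (phi @: vset G) (eset G) (fun e => phi (src G e)) (fun e => phi (tgt G e)).

End MGraph.

From mathcomp Require Import all_boot.
From Stdlib Require Import FunctionalExtensionality.
Set Implicit Arguments. Unset Strict Implicit. Unset Printing Implicit Defensive.

(* Sort the spanning trees T of G by the set S of neighbours of u in T. Such a
   T is a star, one edge from u to each vertex of S (prod_(v in S) mult u v
   choices), together with a set F of edges of H = G - u.  Contracting the star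
   maps T onto F inside H_S, so T is a spanning tree of G exactly when F is a
   spanning tree of H_S.  Summing over the nonempty S included in N(u) and using
   H_{v} = H gives the formula. *)

Lemma homo_connect (T T' : finType) (e : rel T) (e' : rel T') (f : T -> T') :
  {homo f : x y / e x y >-> connect e' x y} ->
  {homo f : x y / connect e x y >-> connect e' x y}.
Proof.
move=> fe x y /connectP[p xp ->]; elim: p x xp => [|z p IHp] x /=.
  by rewrite connect0.
by case/andP=> /fe exz /IHp; apply: connect_trans.
Qed.

Lemma connect_crossing (T : finType) (e : rel T) (P : pred T) x y :
  connect e x y -> ~~ P x -> P y -> exists a b, [/\ ~~ P a, P b & e a b].
Proof.
move=> /connectP[p xp ->]; elim: p x xp => [|z p IHp] x /=; first by move=> _ /negPf->.
case/andP=> exz zp Px Py; case Pz: (P z); first by exists x, z; rewrite Pz.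
by apply: IHp zp _ Py; rewrite Pz.
Qed.

Lemma big_nonempty_subsets (R : Type) (idx : R) (op : Monoid.com_law idx)
    (T : finType) (A : {set T}) (F : {set T} -> R) :
  \big[op/idx]_(S : {set T} | (S \subset A) && (S != set0)) F S =
  op (\big[op/idx]_(v in A) F [set v])
     (\big[op/idx]_(S : {set T} | (S \subset A) && (1 < #|S|)) F S).
Proof.
rewrite (bigID (fun S : {set T} => 1 < #|S|)) /= Monoid.mulmC; congr (op _ _); last first.
  apply: eq_bigl => S; case S1 : (1 < #|S|); rewrite ?andbF ?andbT //.
  by rewrite -card_gt0 (ltnW S1) andbT.
rewrite -(big_imset F (in2W (@set1_inj T)) : _ = \big[op/idx]_(v in A) F [set v]).
apply: eq_bigl => S; apply/andP/imsetP => [[/andP[SA S0] S1] | [v vA ->]].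
  have /cards1P[v Sv] : #|S| == 1 by rewrite eqn_leq leqNgt S1 card_gt0.
  by exists v; rewrite // -sub1set -Sv.
by rewrite sub1set vA cards1 -card_gt0 cards1.
Qed.

Section Graph.
Variables (V E : finType) (G : mgraph V E).
Implicit Types (F T : {set E}) (e : E) (u v w x y : V).

Lemma joinsC e x y : joins G e x y = joins G e y x.
Proof. by rewrite /joins orbC. Qed.

Lemma joins_src_tgt e : joins G e (src G e) (tgt G e).
Proof. by rewrite /joins !eqxx. Qed.

Lemma joins_same_end e x v w : joins G e x v -> joins G e x w -> v != x -> w = v.
Proof.
by rewrite /joins => /orP[] /andP[/eqP-> /eqP->] /orP[] /andP[/eqP ? /eqP ?] ?; subst.
Qed.

Lemma joins_ends_in e x y u v : joins G e x y -> joins G e u v ->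
  ((x == u) || (x == v)) && ((y == u) || (y == v)).
Proof.
by rewrite /joins => /orP[] /andP[/eqP-> /eqP->] /orP[] /andP[/eqP-> /eqP->];
  rewrite !eqxx ?orbT.
Qed.

Lemma adjF_sym F : symmetric (adjF G F).
Proof.
by move=> x y; apply/existsP/existsP => -[e /andP[eF j]]; exists e; rewrite eF joinsC.
Qed.

Lemma connect_adjFC F x y : connect (adjF G F) x y = connect (adjF G F) y x.
Proof. exact/sym_connect_sym/adjF_sym. Qed.

Lemma adjF_joins F e x y : e \in F -> joins G e x y -> adjF G F x y.
Proof. by move=> eF j; apply/existsP; exists e; rewrite eF. Qed.

Lemma connect_adjF_edge F e : e \in F -> connect (adjF G F) (src G e) (tgt G e).
Proof. by move=> eF; apply/connect1/(adjF_joins eF)/joins_src_tgt. Qed.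

Lemma path_adjF_setD1 F e0 v x p : path (adjF G F) x p -> v \notin x :: p ->
  src G e0 = v \/ tgt G e0 = v -> path (adjF G (F :\ e0)) x p.
Proof.
move=> + + e0v; elim: p x => [|z p IHp] x //= /andP[/existsP[e /andP[eF j]] zp].
rewrite !inE !negb_or => /and3P[xv zv pv]; rewrite IHp ?inE ?negb_or ?zv // andbT.
apply: (adjF_joins _ j); rewrite !inE eF andbT; apply: contraTneq j => ->.
by rewrite /joins; case: e0v => ->; rewrite (negPf xv) (negPf zv) ?andbF.
Qed.

Definition avoids u F := {in F, forall e, (src G e != u) && (tgt G e != u)}.

Lemma avoids_setD1 u F e : avoids u F -> avoids u (F :\ e).
Proof. by move=> Fu z /setD1P[_ /Fu]. Qed.

Lemma avoids_joins u F e x : avoids u F -> e \in F -> ~~ joins G e u x.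
Proof.
by move=> Fu /Fu /andP[su tu]; rewrite /joins (negPf su) (negPf tu) !andbF.
Qed.

Lemma avoids_connect u F x : avoids u F -> x != u -> ~~ connect (adjF G F) x u.
Proof.
move=> Fu xu; apply/negP => /(connect_crossing (P := pred1 u)).
rewrite /= eqxx xu => /(_ isT isT) [a [_ [_ /eqP-> /existsP[e /andP[eF]]]]].
by rewrite joinsC; apply/negP; apply: avoids_joins Fu eF.
Qed.

Lemma spanning_tree_sub T : spanning_tree G T -> T \subset eset G.
Proof. by case/and3P. Qed.

Lemma spanning_tree_joins_uniq T e e' x y : spanning_tree G T -> e \in T -> e' \in T ->
  joins G e x y -> joins G e' x y -> e = e'.
Proof.
case/and3P=> _ _ /forall_inP acyc eT e'T j j'; apply/eqP/negPn/negP => ee'.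
have xy : connect (adjF G (T :\ e)) x y.
  by apply/connect1/(adjF_joins _ j'); rewrite !inE eq_sym ee'.
move: (acyc e eT); case/orP: j => /andP[/eqP-> /eqP->]; first by rewrite xy.
by rewrite connect_adjFC xy.
Qed.

Lemma spanning_tree_noloop T e : spanning_tree G T -> e \in T -> src G e != tgt G e.
Proof.
by case/and3P=> _ _ /forall_inP acyc /acyc; apply: contraNneq => ->; apply: connect0.
Qed.

Lemma avoids_del_vertex u F : F \subset eset (del_vertex G u) -> avoids u F.
Proof. by move=> FH e /(subsetP FH); rewrite inE => /andP[]. Qed.

Lemma identify_set1 v : identify G [set v] = G.
Proof.
have idv x : ident_map [set v] x x = x.
  by rewrite /ident_map; case: ifP => // /set1P ->; case: pickP => [y /set1P -> | ].
rewrite /identify (eq_imset _ idv) imset_id.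
by case: G idv => W F s t idv /=; congr MGraph; apply: functional_extensionality => e.
Qed.

End Graph.

Section Star.
Variables (V E : finType) (G : mgraph V E) (u s0 : V) (S : {set V}).
Implicit Types (F : {set E}) (e : E) (v w x y : V).
Hypothesis pick_S : [pick y in S] = Some s0.

Let H := identify (del_vertex G u) S.

Lemma ident_mapE x : ident_map S x x = if x \in S then s0 else x.
Proof. by rewrite /ident_map pick_S. Qed.

Lemma pick_mem : s0 \in S.
Proof. by move: pick_S; case: pickP => // y yS [<-]. Qed.

Lemma adjF_identify F x y : adjF G F x y -> adjF H F (ident_map S x x) (ident_map S y y).
Proof.
case/existsP=> e /andP[eF j]; apply/existsP; exists e; rewrite eF /joins /=.
by case/orP: j => /andP[/eqP-> /eqP->]; rewrite !eqxx ?orbT.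
Qed.

(* The shortest path from [v] to [w] leaves [v] through an edge [e0]; the rest
   of the path avoids [v], and its image joins the two (identified) ends of [e0]. *)
Lemma connect_identify_cycle F v w : connect (adjF G F) v w ->
  v \in S -> w \in S -> v != w -> ~~ acyclic H F.
Proof.
case/connectP=> p vp ->{w}; case: (shortenP vp) => -[|x q] /= xq uq _ vS qS vq.
  by rewrite eqxx in vq.
case/andP: xq => /existsP[e0 /andP[e0F j0]] xq; case/andP: uq => vxq _.
have e0v : src G e0 = v \/ tgt G e0 = v.
  by case/orP: j0 => /andP[/eqP ? /eqP ?]; [left | right].
have xq' : connect (adjF G (F :\ e0)) x (last x q).
  by apply/connectP; exists q => //; apply: path_adjF_setD1 xq vxq e0v.
have := homo_connect (fun a b ab => connect1 (adjF_identify ab)) xq'.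
have phi_v : ident_map S v v = s0 by rewrite ident_mapE vS.
rewrite [ident_map S (last x q) _]ident_mapE qS -phi_v => xv.
apply/forall_inP => /(_ e0 e0F) /negP; apply.
by rewrite /=; case/orP: j0 => /andP[/eqP-> /eqP->]; rewrite // connect_adjFC.
Qed.

Variable A : {set E}.
Hypothesis u_notin_S : u \notin S.
Hypothesis star_end : {in A, forall e, exists2 s, s \in S & joins G e u s}.
Hypothesis star_cover : {in S, forall s, exists2 e, e \in A & joins G e u s}.

(* Contracting the star edges [A] merges [u] into the identified vertex [s0]. *)
Let collapse x := if (x == u) || (x \in S) then s0 else x.

Lemma pick_neq : s0 != u.
Proof. by apply: contraNneq u_notin_S => <-; apply: pick_mem. Qed.

Lemma collapse_identify x : x != u -> collapse x = ident_map S x x.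
Proof. by rewrite ident_mapE /collapse => /negPf->. Qed.

Lemma collapse_star e x y : e \in A -> joins G e x y -> collapse x = s0 /\ collapse y = s0.
Proof.
move=> eA j; have [s sS js] := star_end eA; have /andP[xus yus] := joins_ends_in j js.
by split; rewrite /collapse; [case/orP: xus | case/orP: yus] => /eqP->; rewrite ?eqxx ?sS ?orbT.
Qed.

Lemma connect_collapse F x : connect (adjF G (F :|: A)) x (collapse x).
Proof.
have uS s : s \in S -> connect (adjF G (F :|: A)) u s.
  by case/star_cover=> e eA j; apply/connect1/(adjF_joins _ j); rewrite inE eA orbT.
rewrite /collapse; case: eqP => [-> | _] /=; first exact/uS/pick_mem.
case: ifP => xS; last exact: connect0.
by apply: connect_trans (uS _ pick_mem); rewrite connect_adjFC uS.
Qed.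

Lemma connect_star F x y : avoids G u F ->
  connect (adjF G (F :|: A)) x y = connect (adjF H F) (collapse x) (collapse y).
Proof.
move=> Fu; apply/idP/idP.
  apply: homo_connect => a b /existsP[e /andP[]]; rewrite inE => /orP[eF | eA] j.
    have /andP[su tu] := Fu e eF; apply/connect1/existsP; exists e.
    rewrite eF /joins /= -!collapse_identify //.
    by case/orP: j => /andP[/eqP-> /eqP->]; rewrite !eqxx ?orbT.
  by have [-> ->] := collapse_star eA j; apply: connect0.
move=> xy; apply: connect_trans (connect_collapse F x) _.
rewrite connect_adjFC; apply: connect_trans (connect_collapse F y) _.
rewrite connect_adjFC; move: xy; apply: (homo_connect (f := id)) => a b.
case/existsP=> e /andP[eF]; have /andP[su tu] := Fu e eF.
have st : connect (adjF G (F :|: A)) (src G e) (tgt G e).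
  by apply: connect_adjF_edge; rewrite inE eF.
rewrite /joins /= -!collapse_identify //.
case/orP=> /andP[/eqP<- /eqP<-]; [|rewrite connect_adjFC];
  apply: connect_trans (connect_trans _ st) (connect_collapse F _);
  by rewrite connect_adjFC connect_collapse.
Qed.

Lemma collapse_vset x : S \subset vset G -> x \in vset G -> collapse x \in vset H.
Proof.
move=> SG xG; have [-> | xu] := eqVneq x u.
  rewrite /collapse eqxx /=; apply/imsetP; exists s0; last by rewrite ident_mapE pick_mem.
  by rewrite !inE pick_neq (subsetP SG _ pick_mem).
by rewrite collapse_identify //; apply: imset_f; rewrite !inE xu.
Qed.

Lemma connected_star F : avoids G u F -> S \subset vset G ->
  [forall x in vset G, forall y in vset G, connect (adjF G (F :|: A)) x y] =
  [forall x in vset H, forall y in vset H, connect (adjF H F) x y].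
Proof.
move=> Fu SG; apply/forall_inP/forall_inP => conn x xG; apply/forall_inP => y yG.
  case/imsetP: xG => {}x /setD1P[xu xG] ->; case/imsetP: yG => {}y /setD1P[yu yG] ->.
  by rewrite -!collapse_identify // -connect_star //; apply: (forall_inP (conn x xG)).
rewrite connect_star //; apply: (forall_inP (conn _ (collapse_vset SG xG))).
exact: collapse_vset.
Qed.

Hypothesis star_uniq : forall e e' s, e \in A -> e' \in A ->
  joins G e u s -> joins G e' u s -> e = e'.

(* If [u] reached [v] without the star edge [a] at [v], the first star edge
   entering the [F]-component of [v] would come from another [w] in [S],
   so [F] would connect [v] and [w]. *)
Lemma star_edge_bridge F a : avoids G u F -> acyclic H F -> a \in A ->
  ~~ connect (adjF G ((F :|: A) :\ a)) (src G a) (tgt G a).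
Proof.
move=> Fu acyc aA; have [v vS av] := star_end aA.
have vu : v != u by apply: contraNneq u_notin_S => <-.
suff: ~~ connect (adjF G ((F :|: A) :\ a)) u v.
  by case/orP: av => /andP[/eqP-> /eqP->] //; rewrite connect_adjFC.
apply/negP => /(connect_crossing (P := connect (adjF G F) v)) [].
- exact: avoids_connect Fu vu.
- exact: connect0.
move=> x [w [vx vw /existsP[e /andP[]]]].
rewrite !inE => /andP[ea /orP[eF | eA]] j.
  case/negP: vx; apply: connect_trans vw _.
  by rewrite connect_adjFC; apply/connect1/(adjF_joins eF).
have [w' w'S ew'] := star_end eA; have /andP[_ ww'] := joins_ends_in j ew'.
have wu : w != u by apply: contraTneq vw => ->; apply: avoids_connect Fu vu.
have w_w' : w = w' by case/orP: ww' => /eqP // wu'; rewrite wu' eqxx in wu.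
subst w'.
have vw' : v != w.
  by apply: contraNneq ea => vw'; subst w; apply/eqP; apply: star_uniq ew' av.
by case/negP: (connect_identify_cycle vw vS w'S vw').
Qed.

Lemma star_notin F e : avoids G u F -> e \in F -> e \notin A.
Proof.
by move=> Fu eF; apply/negP => /star_end[s _]; apply/negP; apply: avoids_joins eF.
Qed.

Lemma acyclic_star F : avoids G u F -> acyclic G (F :|: A) = acyclic H F.
Proof.
move=> Fu; have FA_setD1 e : e \in F -> (F :|: A) :\ e = (F :\ e) :|: A.
  move=> eF; apply/setP => z; rewrite !inE; case: eqP => // ->.
  by rewrite (negPf (star_notin Fu eF)).
have edgeF e : e \in F -> connect (adjF G ((F :|: A) :\ e)) (src G e) (tgt G e)
    = connect (adjF H (F :\ e)) (src H e) (tgt H e).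
  move=> eF; have /andP[su tu] := Fu e eF.
  by rewrite FA_setD1 // connect_star ?collapse_identify //; apply: avoids_setD1.
apply/forall_inP/forall_inP => acyc e eF.
  by rewrite -edgeF //; apply: acyc; rewrite inE eF.
case/setUP: eF => [eF | eA]; last by apply: star_edge_bridge => //; apply/forall_inP.
by rewrite edgeF //; apply: acyc.
Qed.

Hypothesis star_sub : A \subset eset G.

Lemma spanning_tree_star F : F \subset eset H -> S \subset vset G ->
  spanning_tree G (F :|: A) = spanning_tree H F.
Proof.
move=> FH SG; have Fu := avoids_del_vertex FH.
have FG : F \subset eset G.
  by apply/subsetP => e /(subsetP FH); rewrite inE => /andP[].
by rewrite /spanning_tree subUset FG star_sub FH connected_star ?acyclic_star.
Qed.

End Star.

Section Count.
Variables (V E : finType) (G : mgraph V E) (u : V).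
Implicit Types (F T : {set E}) (S : {set V}) (e : E) (v w : V).
Hypothesis wfG : wf_graph G.

Let N := nbhd G u.
Let H := del_vertex G u.

Definition nbhdF T := [set v in N | [exists e in T, joins G e u v]].
Definition incident := [set e | (src G e == u) || (tgt G e == u)].
Definition joining v := [set e in eset G | joins G e u v].

Lemma nbhd_neq v : v \in N -> v != u.
Proof. by rewrite inE => /and3P[]. Qed.

Lemma nbhd_sub : N \subset vset G.
Proof. by apply/subsetP => v; rewrite inE => /andP[]. Qed.

Lemma incident_joins e v : joins G e u v -> e \in incident.
Proof. by rewrite inE => /orP[] /andP[/eqP-> /eqP->]; rewrite eqxx ?orbT. Qed.

Lemma avoids_incident F : avoids G u F -> [disjoint F & incident].
Proof.
move=> Fu; apply/pred0P => e /=; apply/negP => /andP[/Fu /andP[su tu]].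
by rewrite inE (negPf su) (negPf tu).
Qed.

Lemma nbhdF_neq0 T : u \in vset G -> spanning_tree G T -> N != set0 -> nbhdF T != set0.
Proof.
move=> uG /and3P[TG /forall_inP span _] /set0Pn[v vN].
have uv := forall_inP (span u uG) v (subsetP nbhd_sub v vN).
have [a [b [/negPn/eqP-> bu /existsP[e /andP[eT j]]]]] :=
  connect_crossing (P := predC1 u) uv (introT negPn (eqxx u)) (nbhd_neq vN).
have /andP[sG tG] := forall_inP wfG e (subsetP TG e eT).
have bG : b \in vset G by case/orP: j => /andP[/eqP su /eqP tb]; rewrite -?tb -?su.
apply/set0Pn; exists b; rewrite !inE bG [b != u]bu /=.
by apply/andP; split; apply/existsP; exists e; rewrite j ?eT ?(subsetP TG e eT).
Qed.

Lemma tree_incident_end T e : spanning_tree G T -> e \in T -> e \in incident ->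
  exists2 w, w \in nbhdF T & joins G e u w.
Proof.
move=> TS eT eu; have eG := subsetP (spanning_tree_sub TS) e eT.
have /andP[sG tG] := forall_inP wfG e eG; have st := spanning_tree_noloop TS eT.
have [w [wG wu ew]] : exists w, [/\ w \in vset G, w != u & joins G e u w].
  move: eu; rewrite inE => /orP[] /eqP eu; [exists (tgt G e) | exists (src G e)].
  by split=> //; [rewrite -eu eq_sym | rewrite /joins eu !eqxx].
  by split=> //; [rewrite -eu | rewrite /joins eu !eqxx orbT].
exists w => //; rewrite !inE wG wu /=.
by apply/andP; split; apply/existsP; exists e; rewrite ew ?eG ?eT.
Qed.

Section StarTrees.
Variables (S : {set V}) (s0 : V) (e0 : E).
Hypothesis S_nbhd : S \subset N.
Hypothesis pick_S : [pick y in S] = Some s0.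

Let HS := identify H S.
Let D := setX [set f | f \in pfamily e0 S joining] [set F | spanning_tree HS F].
Let glue (p : {ffun V -> E} * {set E}) := p.2 :|: p.1 @: S.

Lemma u_notin_S : u \notin S.
Proof. by apply/negP => /(subsetP S_nbhd)/nbhd_neq; rewrite eqxx. Qed.

Lemma S_vset : S \subset vset G.
Proof. exact: subset_trans S_nbhd nbhd_sub. Qed.

Lemma family_joins f v : f \in pfamily e0 S joining -> v \in S ->
  (f v \in eset G) && joins G (f v) u v.
Proof. by case/pfamilyP=> _ fS /fS; rewrite inE. Qed.

Lemma family_out f v : f \in pfamily e0 S joining -> v \notin S -> f v = e0.
Proof. by case/pfamilyP=> /supportP fS _ /fS. Qed.

Lemma family_same f v w : f \in pfamily e0 S joining -> v \in S ->
  joins G (f v) u w -> w = v.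
Proof.
move=> fP vS; case/andP: (family_joins fP vS) => _ fv /(joins_same_end fv); apply.
exact/nbhd_neq/(subsetP S_nbhd).
Qed.

Lemma family_star f : f \in pfamily e0 S joining ->
  [/\ {in f @: S, forall e, exists2 s, s \in S & joins G e u s},
      {in S, forall s, exists2 e, e \in f @: S & joins G e u s},
      (forall e e' s, e \in f @: S -> e' \in f @: S ->
         joins G e u s -> joins G e' u s -> e = e'),
      f @: S \subset eset G & f @: S \subset incident].
Proof.
move=> fP; split.
- by move=> _ /imsetP[v vS ->]; exists v => //; case/andP: (family_joins fP vS).
- move=> s sS; exists (f s); first exact: imset_f.
  by case/andP: (family_joins fP sS).
- move=> _ _ s /imsetP[v vS ->] /imsetP[w wS ->] /(family_same fP vS)->.
  by move/(family_same fP wS)->.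
- by apply/subsetP => _ /imsetP[v vS ->]; case/andP: (family_joins fP vS).
- apply/subsetP => _ /imsetP[v vS ->]; case/andP: (family_joins fP vS) => _.
  exact: incident_joins.
Qed.

Lemma family_spanning_tree f F : f \in pfamily e0 S joining -> F \subset eset HS ->
  spanning_tree G (F :|: f @: S) = spanning_tree HS F.
Proof.
move=> fP FH; have [star_end star_cover star_uniq star_sub _] := family_star fP.
by rewrite (spanning_tree_star pick_S u_notin_S star_end star_cover star_uniq star_sub)
  ?S_vset.
Qed.

Lemma glue_spanning p : p \in D -> spanning_tree G (glue p).
Proof.
case: p => f F /setXP[]; rewrite !in_set /= => fP FS.
by rewrite /glue /= family_spanning_tree // (spanning_tree_sub FS).
Qed.

Lemma glue_nbhdF p : p \in D -> nbhdF (glue p) = S.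
Proof.
case: p => f F /setXP[]; rewrite !in_set /= => fP FS.
have Fu := avoids_del_vertex (spanning_tree_sub FS).
apply/setP => v; rewrite inE; apply/andP/idP => [[vN] | vS].
  case/existsP=> e /andP[/setUP[eF | /imsetP[w wS ->]] ev].
    by rewrite (negPf (avoids_joins v Fu eF)) in ev.
  by rewrite (family_same fP wS ev).
split; first exact: (subsetP S_nbhd).
apply/existsP; exists (f v); rewrite inE imset_f ?orbT //=.
by case/andP: (family_joins fP vS).
Qed.

Lemma glue_split p : p \in D -> glue p :\: incident = p.2 /\ glue p :&: incident = p.1 @: S.
Proof.
case: p => f F /setXP[]; rewrite !in_set /= => fP FS.
have [_ _ _ _ fS_inc] := family_star fP.
have FI := avoids_incident (avoids_del_vertex (spanning_tree_sub FS)).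
have /eqP fSI : f @: S :\: incident == set0 by rewrite setD_eq0.
rewrite /glue /= setDUl (setDidPl FI) fSI setU0 setIUl (disjoint_setI0 FI) set0U.
by rewrite (setIidPl fS_inc).
Qed.

Lemma glue_inj : {in D &, injective glue}.
Proof.
move=> [f1 F1] [f2 F2] p1 p2 eq12.
have [F1E fS1] := glue_split p1; have [F2E fS2] := glue_split p2.
rewrite eq12 /= in F1E fS1; rewrite F1E /= in F2E; rewrite fS1 /= in fS2.
move: p1 p2; rewrite !inE /= => /andP[fP1 _] /andP[fP2 _].
congr (_, _) => //; apply/ffunP => v; have [vS | vS] := boolP (v \in S); last first.
  by rewrite (family_out fP1 vS) (family_out fP2 vS).
have /andP[_ j] := family_joins fP1 vS.
have /imsetP[w wS f12] : f1 v \in f2 @: S by rewrite -fS2 imset_f.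
by rewrite f12 in j *; rewrite (family_same fP2 wS j).
Qed.

Lemma tree_family T : spanning_tree G T -> nbhdF T = S ->
  exists2 f, f \in pfamily e0 S joining & f @: S = T :&: incident.
Proof.
move=> TS TN.
pose f := [ffun v => if v \in S then odflt e0 [pick e in T | joins G e u v] else e0].
have fT v : v \in S -> (f v \in T) && joins G (f v) u v.
  move=> vS; rewrite ffunE vS; case: pickP => [e /andP[-> ->] // | noe].
  by move: vS; rewrite -TN inE => /andP[_ /existsP[e]]; rewrite noe.
exists f.
  apply/pfamilyP; split; first by apply/supportP => v /negPf vS; rewrite ffunE vS.
  move=> v /fT /andP[vT j]; rewrite inE j andbT.
  exact: (subsetP (spanning_tree_sub TS)).
apply/setP => e; rewrite inE; apply/imsetP/andP => [[v vS ->] | [eT eI]].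
  by have /andP[-> j] := fT v vS; rewrite (incident_joins j).
have [w wN ew] := tree_incident_end TS eT eI; rewrite TN in wN.
exists w => //; have /andP[fwT fw] := fT w wN.
exact: spanning_tree_joins_uniq TS eT fwT ew fw.
Qed.

Lemma star_trees_glue : [set T | spanning_tree G T & nbhdF T == S] = glue @: D.
Proof.
apply/setP => T; rewrite inE; apply/andP/imsetP => [[TS /eqP TN] | [p pD ->]].
  have [f fP fST] := tree_family TS TN.
  have FH : T :\: incident \subset eset HS.
    apply/subsetP => e /setDP[eT eI]; rewrite inE (subsetP (spanning_tree_sub TS) e eT).
    by move: eI; rewrite inE negb_or.
  have glueT : T :\: incident :|: f @: S = T by rewrite fST setUC setID.
  exists (f, T :\: incident); last by rewrite /glue /= glueT.
  by rewrite !in_set fP -(family_spanning_tree fP FH) glueT.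
by rewrite glue_spanning ?glue_nbhdF.
Qed.

Lemma card_star_trees :
  #|[set T | spanning_tree G T & nbhdF T == S]| = (\prod_(v in S) mult G u v) * ntrees HS.
Proof.
rewrite star_trees_glue card_in_imset; last exact: glue_inj.
by rewrite cardsX cardsE card_pfamily foldrE big_map big_enum.
Qed.

End StarTrees.

Lemma ntrees_sum_nbhd : u \in vset G -> N != set0 ->
  ntrees G = \sum_(S : {set V} | (S \subset N) && (S != set0))
               (\prod_(v in S) mult G u v) * ntrees (identify H S).
Proof.
move=> uG N0; rewrite /ntrees -sum1_card.
rewrite (partition_big nbhdF (fun S => (S \subset N) && (S != set0))); last first.
  move=> T; rewrite inE => TS; rewrite nbhdF_neq0 // andbT.
  by apply/subsetP => v; rewrite inE => /andP[].
apply: eq_bigr => S /andP[SN /set0Pn[s sS]].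
have [s0 pick_S] : exists s0, [pick y in S] = Some s0.
  by case: pickP => [s0 _ | noS]; [exists s0 | rewrite noS in sS].
have [e0 _] : exists e0 : E, true.
  by have := subsetP SN s sS; rewrite inE => /and3P[_ _ /existsP[e _]]; exists e.
rewrite -(card_star_trees e0 SN pick_S) -sum1_card.
by apply: eq_bigl => T; rewrite !inE.
Qed.

End Count.

Theorem theorem5p8 (V E : finType) (G : mgraph V E) (u : V) :
  wf_graph G -> u \in vset G -> connected G ->
  2 <= #|nbhd G u| -> ~~ cut_vertex G u ->
  ntrees G =
    (\sum_(v in nbhd G u) mult G u v) * ntrees (del_vertex G u)
    + \sum_(S : {set V} | (S \subset nbhd G u) && (2 <= #|S|))
        (\prod_(v in S) mult G u v) * ntrees (identify (del_vertex G u) S).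
Proof.
move=> wfG uG _ N2 _; have N0 : nbhd G u != set0 by rewrite -card_gt0 ltnW.
rewrite (ntrees_sum_nbhd wfG uG N0) big_nonempty_subsets big_distrl /=.
by congr (_ + _); apply: eq_bigr => v _; rewrite big_set1 identify_set1.
Qed.
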